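(* Let $\psi(x)=-2\pi\sin(2\pi x)$, $b\ge2$ an integer, $\gamma\in(1/b,1)$, and let $\Delta_{b,\gamma}=\max_{t\in\mathbb{R}}(\sin(bt)+\gamma\sin t)$. If $k,l\in\mathcal{A}$ and $x^*\in\mathbb{R}$ satisfy $(k,l)\in E(1,x^* )$, then $$\Big|\sin\tfrac{2\pi(x^*+k)}{b}-\sin\tfrac{2\pi(x^*+l)}{b}\Big|\le\frac{2\Delta_{b,\gamma}\gamma}{1-\gamma^2}\le\frac{2\gamma}{1-\gamma},\qquad \Big|\cos\tfrac{2\pi(x^*+k)}{b}-\cos\tfrac{2\pi(x^*+l)}{b}\Big|\le\frac{2\gamma}{b-\gamma},$$ and $$4\sin^2\frac{\pi(k-l)}{b}\le\Big(\frac{2\gamma\Delta_{b,\gamma}}{1-\gamma^2}\Big)^2+\Big(\frac{2\gamma}{b-\gamma}\Big)^2\le\Big(\frac{2\gamma}{1-\gamma}\Big)^2+\Big(\frac{2\gamma}{b-\gamma}\Big)^2.$$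
   Context: $\mathcal{A}=\{0,\dots,b-1\}$. $S(x,\mathbf{i})=\sum_{n\ge1}\gamma^{n-1}\psi\big(\frac{x+i_1+i_2b+\cdots+i_nb^{n-1}}{b^n}\big)$ for $\mathbf{i}\in\mathcal{A}^{\mathbb{Z}^+}$, $S'=\partial_xS$. Sequences $\mathbf{i},\mathbf{j}$ are $(\varepsilon,\delta)$-tangent at $x_0$ if $|S(x_0,\mathbf{i})-S(x_0,\mathbf{j})|\le\varepsilon$ and $|S'(x_0,\mathbf{i})-S'(x_0,\mathbf{j})|\le\delta$. $E(1,x_0;\varepsilon,\delta)$ is the set of pairs $(k,l)\in\mathcal{A}\times\mathcal{A}$ such that for some $\mathbf{u},\mathbf{v}\in\mathcal{A}^{\mathbb{Z}^+}$ the sequences $k\mathbf{u},l\mathbf{v}$ (prepending $k$, resp. $l$) are $(\varepsilon,\delta)$-tangent at $x_0$; $E(1,x_0)=\bigcap_{\varepsilon,\delta>0}E(1,x_0;\varepsilon,\delta)$. *)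

From Stdlib Require Import Reals Lra ClassicalEpsilon.
Open Scope R_scope.

Definition psi (x : R) : R := - 2 * PI * sin (2 * PI * x).

(* Sequences in A^{Z+} are nat -> nat, index 0 standing for i_1. *)
Definition in_alphabet (b : nat) (i : nat -> nat) : Prop := forall n, (i n < b)%nat.

(* n-th term (n >= 0, i.e. paper's index n+1):
   gamma^n * psi((x + i_1 + i_2 b + ... + i_{n+1} b^n) / b^{n+1}) *)
Definition S_term (b : nat) (gamma x : R) (i : nat -> nat) (n : nat) : R :=
  gamma ^ n * psi ((x + sum_f_R0 (fun m => INR (i m) * INR b ^ m) n) / INR b ^ (S n)).

Definition Ssum (b : nat) (gamma : R) (x : R) (i : nat -> nat) : R :=
  epsilon (inhabits 0) (fun l => infinite_sum (S_term b gamma x i) l).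

Definition prepend (k : nat) (u : nat -> nat) : nat -> nat :=
  fun n => match n with O => k | S m => u m end.

Definition tangent (b : nat) (gamma : R) (eps delta x0 : R) (i j : nat -> nat) : Prop :=
  Rabs (Ssum b gamma x0 i - Ssum b gamma x0 j) <= eps /\
  exists di dj : R,
    derivable_pt_lim (fun y => Ssum b gamma y i) x0 di /\
    derivable_pt_lim (fun y => Ssum b gamma y j) x0 dj /\
    Rabs (di - dj) <= delta.

Definition in_E1_eps (b : nat) (gamma x0 eps delta : R) (k l : nat) : Prop :=
  (k < b)%nat /\ (l < b)%nat /\
  exists u v : nat -> nat, in_alphabet b u /\ in_alphabet b v /\
    tangent b gamma eps delta x0 (prepend k u) (prepend l v).

Definition in_E1 (b : nat) (gamma x0 : R) (k l : nat) : Prop :=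
  forall eps delta : R, 0 < eps -> 0 < delta -> in_E1_eps b gamma x0 eps delta k l.

Definition Delta_bg (b : nat) (gamma : R) : R :=
  epsilon (inhabits 0) (fun d =>
    (exists t0, sin (INR b * t0) + gamma * sin t0 = d) /\
    forall t, sin (INR b * t) + gamma * sin t <= d).

From Stdlib Require Import Reals Lra Lia ClassicalEpsilon ZArith.
From Coquelicot Require Import Coquelicot.
Open Scope R_scope.

(* Peeling off the first digit gives S(x, k u) = psi((x+k)/b) + gamma S((x+k)/b, u).
   Grouping the terms of S in consecutive pairs, each pair is -2 pi gamma^(2j) times a
   value of sin(b t) + gamma sin t, so |S| <= 2 pi Delta / (1 - gamma^2); and S is
   Lipschitz in x with constant 4 pi^2 / (b - gamma). Tangency of k u and l v at x*
   therefore forces |psi((x*+k)/b) - psi((x*+l)/b)| <= 2 gamma sup |S|, the sine bound.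
   The same comparison for S', using that a Lipschitz function has derivative bounded by
   its constant, gives the cosine bound. The last inequality is the chord identity
   (sin a - sin c)^2 + (cos a - cos c)^2 = 4 sin^2((a - c)/2). *)

Lemma sin_lipschitz a c : Rabs (sin a - sin c) <= Rabs (a - c).
Proof.
  destruct (MVT_abs sin cos c a) as [z [Hz _]].
  { intros; apply derivable_pt_lim_sin. }
  rewrite Hz. rewrite <- (Rmult_1_l (Rabs (a - c))) at 2.
  apply Rmult_le_compat_r; [apply Rabs_pos|].
  apply Rabs_le, COS_bound.
Qed.

Lemma psi_div y B : psi (y / B) = - 2 * PI * sin (2 * PI * y / B).
Proof.
  unfold psi. replace (2 * PI * y / B) with (2 * PI * (y / B)) by (unfold Rdiv; ring).
  reflexivity.
Qed.

Lemma Rabs_psi_le a : Rabs (psi a) <= 2 * PI.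
Proof.
  pose proof PI_RGT_0. unfold psi.
  rewrite Rabs_mult, Rabs_left by lra.
  rewrite <- (Rmult_1_r (2 * PI)) at 2. replace (- (-2 * PI)) with (2 * PI) by ring.
  apply Rmult_le_compat_l; [lra | apply Rabs_le, SIN_bound].
Qed.

Lemma psi_lipschitz a c : Rabs (psi a - psi c) <= 4 * PI ^ 2 * Rabs (a - c).
Proof.
  pose proof PI_RGT_0. unfold psi.
  replace (- 2 * PI * sin (2 * PI * a) - - 2 * PI * sin (2 * PI * c))
    with (- (2 * PI) * (sin (2 * PI * a) - sin (2 * PI * c))) by ring.
  replace (4 * PI ^ 2 * Rabs (a - c)) with (2 * PI * Rabs (2 * PI * a - 2 * PI * c)).
  2:{ replace (2 * PI * a - 2 * PI * c) with (2 * PI * (a - c)) by ring.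
      rewrite Rabs_mult, (Rabs_right (2 * PI)) by lra. ring. }
  rewrite Rabs_mult, Rabs_Ropp, (Rabs_right (2 * PI)) by lra.
  apply Rmult_le_compat_l; [lra | apply sin_lipschitz].
Qed.

Lemma derivable_pt_lim_psi_affine c B x : B <> 0 ->
  derivable_pt_lim (fun y => psi ((y + c) / B)) x
    (- (4 * PI ^ 2 / B) * cos (2 * PI * (x + c) / B)).
Proof.
  intros HB. apply is_derive_Reals. unfold psi. auto_derive; auto.
  replace (2 * PI * (x + c) / B) with (2 * PI * ((x + c) * / B)) by (unfold Rdiv; ring).
  unfold Rdiv. ring.
Qed.

Lemma Rabs_derivable_pt_lim_le f x d K :
  (forall y, Rabs (f y - f x) <= K * Rabs (y - x)) ->
  derivable_pt_lim f x d -> Rabs d <= K.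
Proof.
  intros Hlip Hd. destruct (Rle_dec (Rabs d) K) as [|Hgt]; auto. exfalso.
  destruct (Hd (Rabs d - K) ltac:(lra)) as [del Hdel].
  pose proof (cond_pos del).
  set (h := del / 2).
  assert (Hh : h <> 0) by (unfold h; lra).
  specialize (Hdel h Hh ltac:(unfold h; rewrite Rabs_right; lra)).
  specialize (Hlip (x + h)). replace (x + h - x) with h in Hlip by ring.
  set (q := (f (x + h) - f x) / h) in Hdel.
  assert (Hq : Rabs q <= K).
  { assert (E : f (x + h) - f x = q * h) by (unfold q; field; auto).
    rewrite E, Rabs_mult in Hlip. pose proof (Rabs_pos_lt _ Hh).
    apply Rmult_le_reg_r with (Rabs h); auto. }
  pose proof (Rabs_triang_inv d q). rewrite Rabs_minus_sym in Hdel. lra.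
Qed.

Lemma continuous_periodic_attains_max f T : 0 < T ->
  (forall t, f (t + T) = f t) -> (forall t, continuity_pt f t) ->
  exists t0, forall t, f t <= f t0.
Proof.
  intros HT Hper Hcont.
  assert (HperN : forall t n, f (t + INR n * T) = f t).
  { intros t n; induction n as [|n IH]; [now rewrite Rmult_0_l, Rplus_0_r|].
    rewrite S_INR, <- IH, <- (Hper (t + INR n * T)). f_equal; ring. }
  assert (HperZ : forall t z, f (t + IZR z * T) = f t).
  { intros t [|p|p].
    - now rewrite Rmult_0_l, Rplus_0_r.
    - rewrite <- positive_nat_Z, <- INR_IZR_INZ. apply HperN.
    - rewrite <- (HperN (t + IZR (Z.neg p) * T) (Pos.to_nat p)). f_equal.
      rewrite INR_IZR_INZ, positive_nat_Z, <- Pos2Z.opp_pos, opp_IZR. ring. }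
  destruct (continuity_ab_maj f 0 T) as [t0 [Hmax _]]; [lra | auto |].
  exists t0. intros t.
  set (z := Int_part (t / T)).
  destruct (base_Int_part (t / T)) as [Hz1 Hz2]. fold z in Hz1, Hz2.
  replace (f t) with (f (t - IZR z * T)) by (rewrite <- (HperZ _ z); f_equal; ring).
  apply Hmax. split.
  - apply Rmult_le_compat_r with (r := T) in Hz1; [|lra].
    unfold Rdiv in Hz1. rewrite Rmult_assoc, Rinv_l in Hz1; lra.
  - assert (Hz3 : t / T < IZR z + 1) by lra.
    apply Rmult_lt_compat_r with (r := T) in Hz3; [|lra].
    unfold Rdiv in Hz3. rewrite Rmult_assoc, Rinv_l in Hz3; lra.
Qed.

Lemma ex_series_geom_dominated (a : nat -> R) c q : 0 <= q < 1 ->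
  (forall n, Rabs (a n) <= c * q ^ n) -> ex_series (fun n => Rabs (a n)).
Proof.
  intros Hq Ha.
  apply (@ex_series_le R_AbsRing R_CompleteNormedModule _ (fun n => c * q ^ n)).
  - intros n. change (Rabs (Rabs (a n)) <= c * q ^ n). now rewrite Rabs_Rabsolu.
  - apply (ex_series_scal_l c (fun n => q ^ n)), ex_series_geom. rewrite Rabs_right; lra.
Qed.

Lemma Rabs_Series_le_geom (a : nat -> R) c q : 0 <= q < 1 ->
  (forall n, Rabs (a n) <= c * q ^ n) -> Rabs (Series a) <= c / (1 - q).
Proof.
  intros Hq Ha.
  assert (Hgeom : is_series (fun n => c * q ^ n) (c / (1 - q))).
  { apply (is_series_scal_l c (fun n => q ^ n)), is_series_geom. rewrite Rabs_right; lra. }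
  eapply Rle_trans; [apply Series_Rabs, (ex_series_geom_dominated _ c q); auto|].
  rewrite <- (is_series_unique _ _ Hgeom).
  apply Series_le; [|eexists; exact Hgeom].
  intros n; split; [apply Rabs_pos | apply Ha].
Qed.

Lemma Series_pairs (a : nat -> R) : ex_series a ->
  Series (fun j => a (2 * j)%nat + a (S (2 * j))) = Series a.
Proof.
  intros Ha. apply is_series_unique.
  assert (Hsum : forall n, sum_n (fun j => a (2 * j)%nat + a (S (2 * j))) n = sum_n a (S (2 * n))).
  { induction n as [|n IH].
    - rewrite sum_Sn, !sum_O. reflexivity.
    - replace (S (2 * S n)) with (S (S (S (2 * n)))) by lia.
      rewrite sum_Sn, IH, (sum_Sn a (S (S (2 * n)))), (sum_Sn a (S (2 * n))).
      replace (2 * S n)%nat with (S (S (2 * n))) by lia.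
      unfold plus; simpl. ring. }
  unfold is_series. eapply filterlim_ext; [intros n; symmetry; apply Hsum|].
  apply (is_lim_seq_subseq (sum_n a) (Series a) (fun n => S (2 * n))).
  - apply eventually_subseq. intros; lia.
  - apply Series_correct in Ha. exact Ha.
Qed.

Section Weierstrass_sum.

Variables (b : nat) (gamma : R).
Hypothesis Hb : (2 <= b)%nat.
Hypothesis Hgamma : 0 <= gamma < 1.

Let Hb_ge2 : 2 <= INR b.
Proof. apply (le_INR 2); auto. Qed.

Lemma Rabs_S_term_le x u n : Rabs (S_term b gamma x u n) <= 2 * PI * gamma ^ n.
Proof.
  unfold S_term. rewrite Rabs_mult, Rabs_right by (apply Rle_ge, pow_le; lra).
  rewrite Rmult_comm. apply Rmult_le_compat_r; [apply pow_le; lra | apply Rabs_psi_le].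
Qed.

Lemma ex_series_S_term x u : ex_series (S_term b gamma x u).
Proof.
  apply ex_series_Rabs, (ex_series_geom_dominated _ (2 * PI) gamma); auto using Rabs_S_term_le.
Qed.

Lemma Ssum_Series x u : Ssum b gamma x u = Series (S_term b gamma x u).
Proof.
  destruct (ex_series_S_term x u) as [l Hl].
  unfold Ssum. symmetry. apply is_series_unique, is_series_Reals, epsilon_spec.
  exists l. now apply is_series_Reals.
Qed.

Lemma S_term_prepend x k u n :
  S_term b gamma x (prepend k u) (S n) = gamma * S_term b gamma ((x + INR k) / INR b) u n.
Proof.
  assert (Hdigits : sum_f_R0 (fun m => INR (prepend k u m) * INR b ^ m) (S n) =
                    INR k + INR b * sum_f_R0 (fun m => INR (u m) * INR b ^ m) n).
  { induction n as [|n IH]; [simpl; ring|]. rewrite tech5, IH. simpl. ring. }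
  unfold S_term. rewrite Hdigits.
  assert (INR b ^ S n <> 0) by (apply pow_nonzero; lra).
  replace ((x + (INR k + INR b * sum_f_R0 (fun m => INR (u m) * INR b ^ m) n)) / INR b ^ S (S n))
    with (((x + INR k) / INR b + sum_f_R0 (fun m => INR (u m) * INR b ^ m) n) / INR b ^ S n)
    by (change (INR b ^ S (S n)) with (INR b * INR b ^ S n); field; lra).
  simpl. ring.
Qed.

Lemma Ssum_prepend x k u :
  Ssum b gamma x (prepend k u) =
  psi ((x + INR k) / INR b) + gamma * Ssum b gamma ((x + INR k) / INR b) u.
Proof.
  rewrite !Ssum_Series, Series_incr_1 by apply ex_series_S_term.
  rewrite (Series_ext _ _ (S_term_prepend x k u)), Series_scal_l.
  unfold S_term at 1. simpl. f_equal. rewrite Rmult_1_l. f_equal. field. lra.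
Qed.

Lemma Ssum_lipschitz x y u :
  Rabs (Ssum b gamma x u - Ssum b gamma y u) <= 4 * PI ^ 2 / (INR b - gamma) * Rabs (x - y).
Proof.
  rewrite !Ssum_Series, <- Series_minus by apply ex_series_S_term.
  set (c := 4 * PI ^ 2 * Rabs (x - y) / INR b).
  replace (4 * PI ^ 2 / (INR b - gamma) * Rabs (x - y)) with (c / (1 - gamma / INR b))
    by (unfold c; field; lra).
  apply Rabs_Series_le_geom.
  { split.
    - apply Rmult_le_pos; [lra | apply Rlt_le, Rinv_0_lt_compat; lra].
    - apply Rmult_lt_reg_r with (INR b); [lra|].
      unfold Rdiv. rewrite Rmult_assoc, Rinv_l; lra. }
  intros n. unfold S_term.
  assert (HBn : 0 < INR b ^ S n) by (apply pow_lt; lra).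
  rewrite <- Rmult_minus_distr_l, Rabs_mult, (Rabs_right (gamma ^ n))
    by (apply Rle_ge, pow_le; lra).
  eapply Rle_trans; [apply Rmult_le_compat_l; [apply pow_le; lra | apply psi_lipschitz]|].
  replace ((x + sum_f_R0 (fun m => INR (u m) * INR b ^ m) n) / INR b ^ S n -
           (y + sum_f_R0 (fun m => INR (u m) * INR b ^ m) n) / INR b ^ S n)
    with ((x - y) * / INR b ^ S n) by (field; lra).
  rewrite Rabs_mult, (Rabs_right (/ INR b ^ S n)) by (apply Rle_ge, Rlt_le, Rinv_0_lt_compat; lra).
  unfold c, Rdiv. rewrite Rpow_mult_distr, pow_inv. simpl pow.
  right. field. split; try apply pow_nonzero; lra.
Qed.

(* Since [b * 2 pi z_(n+1) = 2 pi z_n + 2 pi u_(n+1)] for the points [z_n] at which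
   [psi] is evaluated, terms [2j] and [2j+1] combine into one value of
   [t |-> sin (b t) + gamma sin t]. *)
Lemma S_term_pair x u j : exists t,
  S_term b gamma x u (2 * j) + S_term b gamma x u (S (2 * j)) =
  - 2 * PI * gamma ^ (2 * j) * (sin (INR b * t) + gamma * sin t).
Proof.
  set (z := fun n => (x + sum_f_R0 (fun m => INR (u m) * INR b ^ m) n) / INR b ^ S n).
  exists (2 * PI * z (S (2 * j))).
  assert (Hz : INR b * (2 * PI * z (S (2 * j))) =
               2 * PI * z (2 * j)%nat + 2 * INR (u (S (2 * j))) * PI).
  { unfold z. rewrite tech5. change (INR b ^ S (S (2 * j))) with (INR b * INR b ^ S (2 * j)).
    field. split; try apply pow_nonzero; lra. }
  unfold S_term, psi. fold (z (2 * j)%nat) (z (S (2 * j))).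
  rewrite Hz, sin_period. simpl pow. ring.
Qed.

Lemma Rabs_Ssum_le x u D : (forall t, Rabs (sin (INR b * t) + gamma * sin t) <= D) ->
  Rabs (Ssum b gamma x u) <= 2 * PI * D / (1 - gamma ^ 2).
Proof.
  intros HD. rewrite Ssum_Series, <- Series_pairs by apply ex_series_S_term.
  apply Rabs_Series_le_geom; [split; nra|].
  intros j. destruct (S_term_pair x u j) as [t ->].
  pose proof PI_RGT_0.
  assert (Hpos : 0 <= 2 * PI * gamma ^ (2 * j)) by (apply Rmult_le_pos; [lra | apply pow_le; lra]).
  rewrite <- pow_mult.
  replace (-2 * PI * gamma ^ (2 * j) * (sin (INR b * t) + gamma * sin t))
    with (- (2 * PI * gamma ^ (2 * j)) * (sin (INR b * t) + gamma * sin t)) by ring.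
  rewrite Rabs_mult, Rabs_Ropp, (Rabs_right _ (Rle_ge _ _ Hpos)).
  replace (2 * PI * D * gamma ^ (2 * j)) with (2 * PI * gamma ^ (2 * j) * D) by ring.
  apply Rmult_le_compat_l; auto.
Qed.

Lemma Ssum_prepend_sub_psi_lipschitz x y k u :
  Rabs ((Ssum b gamma y (prepend k u) - psi ((y + INR k) / INR b)) -
        (Ssum b gamma x (prepend k u) - psi ((x + INR k) / INR b)))
  <= gamma * (4 * PI ^ 2 / (INR b - gamma)) / INR b * Rabs (y - x).
Proof.
  rewrite !Ssum_prepend.
  replace (psi ((y + INR k) / INR b) + gamma * Ssum b gamma ((y + INR k) / INR b) u -
             psi ((y + INR k) / INR b) -
           (psi ((x + INR k) / INR b) + gamma * Ssum b gamma ((x + INR k) / INR b) u -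
             psi ((x + INR k) / INR b)))
    with (gamma * (Ssum b gamma ((y + INR k) / INR b) u - Ssum b gamma ((x + INR k) / INR b) u))
    by ring.
  rewrite Rabs_mult, (Rabs_right gamma) by lra.
  replace (gamma * (4 * PI ^ 2 / (INR b - gamma)) / INR b * Rabs (y - x))
    with (gamma * (4 * PI ^ 2 / (INR b - gamma) *
                   Rabs ((y + INR k) / INR b - (x + INR k) / INR b))).
  { apply Rmult_le_compat_l; [lra | apply Ssum_lipschitz]. }
  replace ((y + INR k) / INR b - (x + INR k) / INR b) with ((y - x) * / INR b) by (field; lra).
  rewrite Rabs_mult, (Rabs_right (/ INR b)) by (apply Rle_ge, Rlt_le, Rinv_0_lt_compat; lra).
  field. lra.
Qed.

End Weierstrass_sum.

Lemma Delta_bg_spec b gamma :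
  (exists t0, sin (INR b * t0) + gamma * sin t0 = Delta_bg b gamma) /\
  forall t, sin (INR b * t) + gamma * sin t <= Delta_bg b gamma.
Proof.
  unfold Delta_bg. apply epsilon_spec.
  set (f := fun t => sin (INR b * t) + gamma * sin t).
  destruct (continuous_periodic_attains_max f (2 * PI)) as [t0 Ht0].
  - pose proof PI_RGT_0. lra.
  - intros t. unfold f.
    replace (INR b * (t + 2 * PI)) with (INR b * t + 2 * INR b * PI) by ring.
    replace (t + 2 * PI) with (t + 2 * INR 1 * PI) by (simpl; ring).
    now rewrite !sin_period.
  - intros t. apply continuity_pt_filterlim, (ex_derive_continuous f). unfold f. auto_derive. auto.
  - exists (f t0). split; [now exists t0 | exact Ht0].
Qed.

Lemma Rabs_le_Delta_bg b gamma t :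
  Rabs (sin (INR b * t) + gamma * sin t) <= Delta_bg b gamma.
Proof.
  destruct (Delta_bg_spec b gamma) as [_ Hmax].
  apply Rabs_le_between. split; [|apply Hmax].
  specialize (Hmax (- t)).
  rewrite Ropp_mult_distr_r_reverse, !sin_neg in Hmax. lra.
Qed.

Lemma Delta_bg_le_1_add b gamma : 0 <= gamma -> Delta_bg b gamma <= 1 + gamma.
Proof.
  intros Hg. destruct (Delta_bg_spec b gamma) as [[t0 <-] _].
  pose proof (SIN_bound (INR b * t0)). pose proof (SIN_bound t0). nra.
Qed.

Lemma sin_sub_sqr_add_cos_sub_sqr a c :
  (sin a - sin c) ^ 2 + (cos a - cos c) ^ 2 = 4 * sin ((a - c) / 2) ^ 2.
Proof.
  pose proof (cos_minus a c) as Hcos.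
  replace (a - c) with (2 * ((a - c) / 2)) in Hcos by field.
  rewrite cos_2a_sin in Hcos.
  pose proof (sin2_cos2 a). pose proof (sin2_cos2 c). unfold Rsqr in *. nra.
Qed.

Section Tangency.

Variables (b : nat) (gamma xs : R) (k l : nat).
Hypothesis Hb : (2 <= b)%nat.
Hypothesis Hgamma : 0 <= gamma < 1.
Hypothesis HE : in_E1 b gamma xs k l.

Let Hb_ge2 : 2 <= INR b.
Proof. apply (le_INR 2); auto. Qed.

Lemma in_E1_sin_diff_le D : (forall t, Rabs (sin (INR b * t) + gamma * sin t) <= D) ->
  Rabs (sin (2 * PI * (xs + INR k) / INR b) - sin (2 * PI * (xs + INR l) / INR b))
    <= 2 * D * gamma / (1 - gamma ^ 2).
Proof.
  intros HD. pose proof PI_RGT_0. apply Rle_plus_epsilon; intros e He.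
  destruct (HE (2 * PI * e) 1 ltac:(nra) ltac:(lra)) as [_ [_ [u [v [_ [_ [Hclose _]]]]]]].
  rewrite !Ssum_prepend, !psi_div in Hclose by (lia || lra).
  set (M := 2 * PI * D / (1 - gamma ^ 2)).
  assert (Hu := Rabs_Ssum_le b gamma Hb Hgamma ((xs + INR k) / INR b) u D HD).
  assert (Hv := Rabs_Ssum_le b gamma Hb Hgamma ((xs + INR l) / INR b) v D HD).
  fold M in Hu, Hv.
  set (Su := Ssum b gamma ((xs + INR k) / INR b) u) in *.
  set (Sv := Ssum b gamma ((xs + INR l) / INR b) v) in *.
  apply Rabs_le_between in Hclose, Hu, Hv.
  assert (- (gamma * M) <= gamma * Su <= gamma * M) by (split; nra).
  assert (- (gamma * M) <= gamma * Sv <= gamma * M) by (split; nra).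
  assert (HM : 2 * PI * (2 * D * gamma / (1 - gamma ^ 2)) = 2 * gamma * M)
    by (unfold M; field; nra).
  apply Rabs_le_between; split; apply Rmult_le_reg_l with (2 * PI); lra.
Qed.

Lemma in_E1_cos_diff_le :
  Rabs (cos (2 * PI * (xs + INR k) / INR b) - cos (2 * PI * (xs + INR l) / INR b))
    <= 2 * gamma / (INR b - gamma).
Proof.
  pose proof PI_RGT_0.
  set (P := 4 * PI ^ 2 / INR b).
  assert (HP : 0 < P) by (apply Rdiv_lt_0_compat; [apply Rmult_lt_0_compat, pow_lt|]; lra).
  apply Rle_plus_epsilon; intros e He.
  destruct (HE 1 (P * e) Rlt_0_1 ltac:(nra)) as [_ [_ [u [v [_ [_ [_ Htan]]]]]]].
  destruct Htan as [di [dj [Hdi [Hdj Hd]]]].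
  set (Phi := fun y => (Ssum b gamma y (prepend k u) - psi ((y + INR k) / INR b)) -
                       (Ssum b gamma y (prepend l v) - psi ((y + INR l) / INR b))).
  set (K := gamma * (4 * PI ^ 2 / (INR b - gamma)) / INR b).
  assert (HPhi_lip : forall y, Rabs (Phi y - Phi xs) <= 2 * K * Rabs (y - xs)).
  { intros y.
    assert (Htail_k := Ssum_prepend_sub_psi_lipschitz b gamma Hb Hgamma xs y k u).
    assert (Htail_l := Ssum_prepend_sub_psi_lipschitz b gamma Hb Hgamma xs y l v).
    fold K in Htail_k, Htail_l.
    lazymatch type of Htail_k with Rabs ?X <= _ => lazymatch type of Htail_l with Rabs ?Y <= _ =>
      replace (Phi y - Phi xs) with (X + - Y) by (unfold Phi; ring) end end.
    eapply Rle_trans; [apply Rabs_triang|]. rewrite Rabs_Ropp. lra. }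
  assert (HB : INR b <> 0) by lra.
  assert (HPhi_deriv := derivable_pt_lim_minus _ _ _ _ _
    (derivable_pt_lim_minus _ _ _ _ _ Hdi (derivable_pt_lim_psi_affine (INR k) (INR b) xs HB))
    (derivable_pt_lim_minus _ _ _ _ _ Hdj (derivable_pt_lim_psi_affine (INR l) (INR b) xs HB))).
  assert (Hbound := Rabs_derivable_pt_lim_le Phi xs _ _ HPhi_lip HPhi_deriv).
  fold P in Hbound.
  assert (HK : 2 * K = P * (2 * gamma / (INR b - gamma))) by (unfold K, P; field; lra).
  rewrite HK in Hbound.
  apply Rabs_le_between in Hbound, Hd.
  apply Rabs_le_between; split; apply Rmult_le_reg_l with P; nra.
Qed.

End Tangency.

Theorem lemma3p3 (b : nat) (gamma : R) (k l : nat) (xs : R) :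
  (2 <= b)%nat -> / INR b < gamma -> gamma < 1 ->
  (k < b)%nat -> (l < b)%nat ->
  in_E1 b gamma xs k l ->
  Rabs (sin (2 * PI * (xs + INR k) / INR b) - sin (2 * PI * (xs + INR l) / INR b))
    <= 2 * Delta_bg b gamma * gamma / (1 - gamma ^ 2) /\
  2 * Delta_bg b gamma * gamma / (1 - gamma ^ 2) <= 2 * gamma / (1 - gamma) /\
  Rabs (cos (2 * PI * (xs + INR k) / INR b) - cos (2 * PI * (xs + INR l) / INR b))
    <= 2 * gamma / (INR b - gamma) /\
  4 * (sin (PI * (INR k - INR l) / INR b)) ^ 2
    <= (2 * gamma * Delta_bg b gamma / (1 - gamma ^ 2)) ^ 2 + (2 * gamma / (INR b - gamma)) ^ 2 /\
  (2 * gamma * Delta_bg b gamma / (1 - gamma ^ 2)) ^ 2 + (2 * gamma / (INR b - gamma)) ^ 2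
    <= (2 * gamma / (1 - gamma)) ^ 2 + (2 * gamma / (INR b - gamma)) ^ 2.
Proof.
  intros Hb Hgl Hgu _ _ HE.
  assert (Hgamma : 0 <= gamma < 1).
  { pose proof (Rinv_0_lt_compat (INR b) (lt_0_INR b ltac:(lia))). lra. }
  set (D := Delta_bg b gamma).
  set (A := 2 * PI * (xs + INR k) / INR b). set (C := 2 * PI * (xs + INR l) / INR b).
  set (T1 := 2 * D * gamma / (1 - gamma ^ 2)). set (T3 := 2 * gamma / (INR b - gamma)).
  assert (Hsin : Rabs (sin A - sin C) <= T1)
    by exact (in_E1_sin_diff_le b gamma xs k l Hb Hgamma HE D (Rabs_le_Delta_bg b gamma)).
  assert (Hcos : Rabs (cos A - cos C) <= T3)
    by exact (in_E1_cos_diff_le b gamma xs k l Hb Hgamma HE).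
  assert (HT1 : T1 <= 2 * gamma / (1 - gamma)).
  { replace (2 * gamma / (1 - gamma)) with (2 * (1 + gamma) * gamma / (1 - gamma ^ 2))
      by (field; repeat split; nra).
    apply Rmult_le_compat_r; [apply Rlt_le, Rinv_0_lt_compat; nra|].
    assert (D <= 1 + gamma) by apply Delta_bg_le_1_add, Hgamma. nra. }
  assert (Hchord : 4 * sin (PI * (INR k - INR l) / INR b) ^ 2
                   = (sin A - sin C) ^ 2 + (cos A - cos C) ^ 2).
  { rewrite sin_sub_sqr_add_cos_sub_sqr. unfold A, C. do 3 f_equal. field. apply not_0_INR. lia. }
  replace (2 * gamma * D / (1 - gamma ^ 2)) with T1 by (unfold T1; field; nra).
  rewrite Hchord, <- (pow2_abs (sin A - sin C)), <- (pow2_abs (cos A - cos C)).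
  pose proof (Rabs_pos (sin A - sin C)). pose proof (Rabs_pos (cos A - cos C)).
  repeat split; nra.
Qed.
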